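(* Let $U$ be any consistent theory (of arbitrary complexity of its axiom set) in the language of arithmetic that extends Robinson's theory $\mathsf{R}$ (the Tarski–Mostowski–Robinson theory). Then there is no formula $\rho(x)$ satisfying both of the following: (Independence) for every sentence $\phi$, if $U+\phi$ is consistent, then both $U+\phi+\rho(\ulcorner\phi\urcorner)$ and $U+\phi+\neg\rho(\ulcorner\phi\urcorner)$ are consistent; (Extensionality) for all sentences $\phi,\psi$, if $U\vdash\phi\leftrightarrow\psi$, then $U\vdash\rho(\ulcorner\phi\urcorner)\leftrightarrow\rho(\ulcorner\psi\urcorner)$.
   Context: $\ulcorner\phi\urcorner$ denotes the numeral of the Gödel number of $\phi$. *)

From Stdlib Require Import Arith List.

Inductive term : Type :=
| tvar  : nat -> term
| tzero : term
| tsucc : term -> term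
| tplus : term -> term -> term
| tmult : term -> term -> term.

Inductive form : Type :=
| fbot : form
| feq  : term -> term -> form
| fimp : form -> form -> form
| fall : form -> form.

Definition scons {A} (a : A) (s : nat -> A) (n : nat) : A :=
  match n with 0 => a | S k => s k end.

Fixpoint tsubst (s : nat -> term) (t : term) : term :=
  match t with
  | tvar n => s n
  | tzero => tzero
  | tsucc u => tsucc (tsubst s u)
  | tplus u v => tplus (tsubst s u) (tsubst s v)
  | tmult u v => tmult (tsubst s u) (tsubst s v)
  end.

Definition tshift (t : term) : term := tsubst (fun n => tvar (S n)) t.

Definition up (s : nat -> term) : nat -> term :=
  scons (tvar 0) (fun n => tshift (s n)).

Fixpoint fsubst (s : nat -> term) (p : form) : form :=
  match p with
  | fbot => fbot
  | feq u v => feq (tsubst s u) (tsubst s v)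
  | fimp a b => fimp (fsubst s a) (fsubst s b)
  | fall a => fall (fsubst (up s) a)
  end.

Definition fshift (p : form) : form := fsubst (fun n => tvar (S n)) p.

Definition inst (t : term) (p : form) : form := fsubst (scons t tvar) p.

Definition fneg (p : form) : form := fimp p fbot.
Definition for_ (p q : form) : form := fimp (fneg p) q.
Definition fand (p q : form) : form := fneg (fimp p (fneg q)).
Definition fex (p : form) : form := fneg (fall (fneg p)).
Definition fiff (p q : form) : form := fand (fimp p q) (fimp q p).

Definition fle (t s : term) : form :=
  fex (feq (tplus (tvar 0) (tshift t)) (tshift s)).

Fixpoint tbound (k : nat) (t : term) : Prop :=
  match t with
  | tvar n => n < k
  | tzero => True
  | tsucc u => tbound k u
  | tplus u v | tmult u v => tbound k u /\ tbound k v
  end.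

Fixpoint fbound (k : nat) (p : form) : Prop :=
  match p with
  | fbot => True
  | feq u v => tbound k u /\ tbound k v
  | fimp a b => fbound k a /\ fbound k b
  | fall a => fbound (S k) a
  end.

Definition sentence (p : form) : Prop := fbound 0 p.

Definition theory := form -> Prop.

Definition shift_theory (T : theory) : theory :=
  fun p => exists q, T q /\ p = fshift q.

Definition extend (T : theory) (p : form) : theory :=
  fun q => T q \/ q = p.

Inductive Prov : theory -> form -> Prop :=
| P_hyp  : forall T p, T p -> Prov T p
| P_K    : forall T p q, Prov T (fimp p (fimp q p))
| P_S    : forall T p q r,
    Prov T (fimp (fimp p (fimp q r)) (fimp (fimp p q) (fimp p r)))
| P_DNE  : forall T p, Prov T (fimp (fneg (fneg p)) p)
| P_inst : forall T p t, Prov T (fimp (fall p) (inst t p))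
| P_allimp : forall T p q,
    Prov T (fimp (fall (fimp (fshift p) q)) (fimp p (fall q)))
| P_refl : forall T t, Prov T (feq t t)
| P_leib : forall T t s p, Prov T (fimp (feq t s) (fimp (inst t p) (inst s p)))
| P_mp   : forall T p q, Prov T (fimp p q) -> Prov T p -> Prov T q
| P_gen  : forall T p, Prov (shift_theory T) p -> Prov T (fall p).

Definition Consistent (T : theory) : Prop := ~ Prov T fbot.

Fixpoint num (n : nat) : term :=
  match n with 0 => tzero | S k => tsucc (num k) end.

Fixpoint bigor_eq (n : nat) : form :=
  match n with
  | 0 => feq (tvar 0) (num 0)
  | S k => for_ (bigor_eq k) (feq (tvar 0) (num (S k)))
  end.

Definition R_axiom (p : form) : Prop :=
  (exists n m, p = feq (tplus (num n) (num m)) (num (n + m))) \/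
  (exists n m, p = feq (tmult (num n) (num m)) (num (n * m))) \/
  (exists n m, n <> m /\ p = fneg (feq (num n) (num m))) \/
  (exists n, p = fall (fimp (fle (tvar 0) (num n)) (bigor_eq n))) \/
  (exists n, p = fall (for_ (fle (tvar 0) (num n)) (fle (num n) (tvar 0)))).

Definition pair (a b : nat) : nat := (a + b) * (a + b + 1) / 2 + b.

Fixpoint code_term (t : term) : nat :=
  match t with
  | tvar n => pair 0 n
  | tzero => pair 1 0
  | tsucc u => pair 2 (code_term u)
  | tplus u v => pair 3 (pair (code_term u) (code_term v))
  | tmult u v => pair 4 (pair (code_term u) (code_term v))
  end.

Fixpoint code (p : form) : nat :=
  match p with
  | fbot => pair 0 0
  | feq u v => pair 1 (pair (code_term u) (code_term v))
  | fimp a b => pair 2 (pair (code a) (code b))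
  | fall a => pair 3 (code a)
  end.

Definition apply_gn (rho phi : form) : form := inst (num (code phi)) rho.

(* By the diagonal lemma, which holds in every theory extending R, there are
   sentences d0 and d1 with U |- d0 <-> ~rho(<d0>) and U |- d1 <-> rho(<d1>).
   Independence makes both refutable in U: were U + d0 consistent, so would be
   U + d0 + rho(<d0>), which also proves ~rho(<d0>); symmetrically for d1.  Hence
   d0 and d1 are both U-equivalent to bot, and Extensionality turns
   U |- rho(<d0>) and U |- ~rho(<d1>) into U |- rho(<bot>) and U |- ~rho(<bot>).

   The diagonal lemma is proved from first principles: Kalmar's completeness
   theorem for the propositional part of the calculus, the deduction theorem,
   completeness of R for bounded sentences, and a bounded definition of the graph
   of the diagonal function, which sends m = <forall x0 (x0 = x1 -> th)> to
   <forall x0 (x0 = m -> th)>.  The code of the numeral m is computed inside that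
   formula through a sequence coded with Goedel's factorial-modulus trick, and a
   uniqueness clause below the witness makes the graph provably functional in R. *)

From Stdlib Require Import Arith List Lia Bool Classical.
Import ListNotations.

(** * Substitution *)

Lemma tsubst_ext s1 s2 t : (forall n, s1 n = s2 n) -> tsubst s1 t = tsubst s2 t.
Proof. intro H; induction t; simpl; f_equal; auto. Qed.

Lemma up_ext s1 s2 : (forall n, s1 n = s2 n) -> forall n, up s1 n = up s2 n.
Proof. intros H [|n]; unfold up, scons; simpl; [reflexivity | now rewrite H]. Qed.

Lemma fsubst_ext p : forall s1 s2, (forall n, s1 n = s2 n) -> fsubst s1 p = fsubst s2 p.
Proof.
  induction p; intros s1 s2 H; simpl; f_equal; auto using tsubst_ext.
  apply IHp, up_ext, H.
Qed.

Lemma tsubst_comp s1 s2 t :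
  tsubst s1 (tsubst s2 t) = tsubst (fun n => tsubst s1 (s2 n)) t.
Proof. induction t; simpl; f_equal; auto. Qed.

Lemma up_comp s1 s2 n : tsubst (up s1) (up s2 n) = up (fun k => tsubst s1 (s2 k)) n.
Proof.
  destruct n; unfold up, scons; simpl; [reflexivity|].
  unfold tshift. rewrite !tsubst_comp. apply tsubst_ext. reflexivity.
Qed.

Lemma fsubst_comp p : forall s1 s2,
  fsubst s1 (fsubst s2 p) = fsubst (fun n => tsubst s1 (s2 n)) p.
Proof.
  induction p; intros s1 s2; simpl; f_equal; auto using tsubst_comp.
  rewrite IHp. apply fsubst_ext, up_comp.
Qed.

Lemma tsubst_id t : tsubst tvar t = t.
Proof. induction t; simpl; f_equal; auto. Qed.

Lemma fsubst_id p : forall s, (forall n, s n = tvar n) -> fsubst s p = p.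
Proof.
  induction p; intros s H; simpl; f_equal; auto;
    try (rewrite (tsubst_ext _ tvar), tsubst_id; auto).
  apply IHp. intros [|n]; unfold up, scons; simpl; auto. rewrite H. reflexivity.
Qed.

Lemma tsubst_bound k t : tbound k t ->
  forall s1 s2, (forall n, n < k -> s1 n = s2 n) -> tsubst s1 t = tsubst s2 t.
Proof. induction t; simpl; intros Hb s1 s2 H; try destruct Hb; f_equal; auto. Qed.

Lemma fsubst_bound p : forall k, fbound k p ->
  forall s1 s2, (forall n, n < k -> s1 n = s2 n) -> fsubst s1 p = fsubst s2 p.
Proof.
  induction p; simpl; intros k Hb s1 s2 H; try destruct Hb; f_equal;
    eauto using tsubst_bound.
  apply (IHp (S k)); auto. intros [|n] Hn; unfold up, scons; simpl; auto.
  rewrite H; auto. lia.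
Qed.

Lemma tbound_subst t : forall k j s, tbound k t ->
  (forall n, n < k -> tbound j (s n)) -> tbound j (tsubst s t).
Proof. induction t; simpl; intros k j s Hb H; try destruct Hb; eauto. Qed.

Lemma tbound_shift t k : tbound k t -> tbound (S k) (tshift t).
Proof. intro H. apply (tbound_subst _ k); auto. intros; simpl; lia. Qed.

Lemma fbound_subst p : forall k j s, fbound k p ->
  (forall n, n < k -> tbound j (s n)) -> fbound j (fsubst s p).
Proof.
  induction p; simpl; intros k j s Hb H; try destruct Hb; eauto using tbound_subst.
  apply (IHp (S k)); auto. intros [|n] Hn; unfold up, scons; simpl; [lia|].
  apply tbound_shift, H. lia.
Qed.

Lemma tbound_mono t : forall k j, tbound k t -> k <= j -> tbound j t.
Proof. induction t; simpl; intros k j Hb H; try destruct Hb; eauto; lia. Qed.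

Lemma fbound_mono p : forall k j, fbound k p -> k <= j -> fbound j p.
Proof.
  induction p; simpl; intros k j Hb H; try destruct Hb; eauto using tbound_mono.
  eapply IHp; eauto; lia.
Qed.

Lemma num_bound n k : tbound k (num n).
Proof. induction n; simpl; auto. Qed.

Lemma tsubst_num s n : tsubst s (num n) = num n.
Proof. induction n; simpl; f_equal; auto. Qed.

Lemma tshift_num n : tshift (num n) = num n.
Proof. apply tsubst_num. Qed.

Lemma sentence_subst p s : sentence p -> fsubst s p = p.
Proof.
  intro H. rewrite (fsubst_bound p 0 H s tvar) by (intros; lia). apply fsubst_id; auto.
Qed.

Lemma sentence_shift p : sentence p -> fshift p = p.
Proof. apply sentence_subst. Qed.

Lemma fbound1_subst_up p s : fbound 1 p -> fsubst (up s) p = p.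
Proof.
  intro H. rewrite (fsubst_bound p 1 H _ tvar) by (intros [|n] Hn; [reflexivity | lia]).
  apply fsubst_id; auto.
Qed.

Lemma fbound1_inst_var0 p : fbound 1 p -> fsubst (scons (tvar 0) tvar) p = p.
Proof.
  intro H. rewrite (fsubst_bound p 1 H _ tvar) by (intros [|n] Hn; [reflexivity | lia]).
  apply fsubst_id; auto.
Qed.

Lemma inst_sentence p n : fbound 1 p -> sentence (inst (num n) p).
Proof.
  intro H. apply (fbound_subst p 1); auto. intros [|k] Hk; [apply num_bound | lia].
Qed.

Lemma inst_up t s p : inst t (fsubst (up s) p) = fsubst (scons t s) p.
Proof.
  unfold inst. rewrite fsubst_comp. apply fsubst_ext. intros [|n]; unfold up, scons; auto.
  unfold tshift. rewrite tsubst_comp. apply tsubst_id.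
Qed.

Lemma tsubst_up_shift s t : tsubst (up s) (tshift t) = tshift (tsubst s t).
Proof. unfold tshift. rewrite !tsubst_comp. apply tsubst_ext. reflexivity. Qed.

Lemma tsubst_scons_shift s u : tsubst (scons s tvar) (tshift u) = u.
Proof. unfold tshift. rewrite tsubst_comp. apply tsubst_id. Qed.

Lemma fle_subst s t u : fsubst s (fle t u) = fle (tsubst s t) (tsubst s u).
Proof. unfold fle, fex, fneg. simpl. unfold tshift. rewrite !tsubst_comp. reflexivity. Qed.

Lemma fle_bound k t s : tbound k t -> tbound k s -> fbound k (fle t s).
Proof. intros. simpl. repeat split; try lia; apply tbound_shift; auto. Qed.

(** * Propositional completeness *)

Lemma term_eq_dec (t s : term) : {t = s} + {t <> s}.
Proof. decide equality; apply Nat.eq_dec. Qed.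

Lemma form_eq_dec (p q : form) : {p = q} + {p <> q}.
Proof. decide equality; apply term_eq_dec. Qed.

Inductive PL (G : list form) : form -> Prop :=
| PL_hyp p : In p G -> PL G p
| PL_K p q : PL G (fimp p (fimp q p))
| PL_S p q r : PL G (fimp (fimp p (fimp q r)) (fimp (fimp p q) (fimp p r)))
| PL_DNE p : PL G (fimp (fneg (fneg p)) p)
| PL_mp p q : PL G (fimp p q) -> PL G p -> PL G q.

Lemma PL_weak G G' p : PL G p -> incl G G' -> PL G' p.
Proof.
  induction 1; intros;
    [apply PL_hyp | apply PL_K | apply PL_S | apply PL_DNE | eapply PL_mp]; eauto.
Qed.

Lemma PL_weak_cons G a p : PL G p -> PL (a :: G) p.
Proof. intro H. apply (PL_weak G); auto. intros x; simpl; auto. Qed.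

Lemma PL_id G p : PL G (fimp p p).
Proof.
  eapply PL_mp; [eapply PL_mp; [apply (PL_S _ p (fimp p p) p) | apply PL_K] | apply (PL_K _ p p)].
Qed.

Lemma PL_ded G a p : PL (a :: G) p -> PL G (fimp a p).
Proof.
  induction 1.
  - destruct H as [-> | H]; [apply PL_id|]. eapply PL_mp; [apply PL_K | apply PL_hyp; auto].
  - eapply PL_mp; [apply PL_K | apply PL_K].
  - eapply PL_mp; [apply PL_K | apply PL_S].
  - eapply PL_mp; [apply PL_K | apply PL_DNE].
  - eapply PL_mp; [eapply PL_mp; [apply PL_S|] |]; eauto.
Qed.

Lemma PL_efq G p : PL G (fimp fbot p).
Proof. apply PL_ded. eapply PL_mp; [apply PL_DNE|]. apply PL_ded, PL_hyp. simpl; auto. Qed.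

Lemma PL_cases G a p : PL (a :: G) p -> PL (fneg a :: G) p -> PL G p.
Proof.
  intros H1 H2. apply PL_ded in H1, H2.
  eapply PL_mp; [apply PL_DNE|]. apply PL_ded.
  assert (Hnp : PL (fneg p :: G) (fneg p)) by (apply PL_hyp; simpl; auto).
  assert (Hna : PL (fneg p :: G) (fneg a)).
  { apply PL_ded. apply (PL_mp _ p); [now apply PL_weak_cons|].
    apply (PL_mp _ a); [now do 2 apply PL_weak_cons | apply PL_hyp; simpl; auto]. }
  apply (PL_mp _ p); [exact Hnp|]. apply (PL_mp _ (fneg a)); [now apply PL_weak_cons | exact Hna].
Qed.

(* Every formula that is not an implication or [fbot] is an atom. *)
Fixpoint ev (v : form -> bool) (p : form) : bool :=
  match p with
  | fbot => false
  | fimp a b => implb (ev v a) (ev v b)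
  | _ => v p
  end.

Fixpoint atoms (p : form) : list form :=
  match p with
  | fbot => []
  | fimp a b => atoms a ++ atoms b
  | _ => [p]
  end.

Definition tautology p := forall v, ev v p = true.

Definition signed (b : bool) (a : form) : form := if b then a else fneg a.

Lemma kalmar p : forall L v, incl (atoms p) L ->
  PL (map (fun a => signed (v a) a) L) (signed (ev v p) p).
Proof.
  induction p; intros L v Hi; simpl in *.
  - apply PL_id.
  - apply PL_hyp. apply (in_map (fun a => signed (v a) a)). apply Hi; simpl; auto.
  - assert (H1 : incl (atoms p1) L) by (intros x Hx; apply Hi, in_or_app; auto).
    assert (H2 : incl (atoms p2) L) by (intros x Hx; apply Hi, in_or_app; auto).
    specialize (IHp1 L v H1). specialize (IHp2 L v H2).
    destruct (ev v p1), (ev v p2); simpl in *.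
    + eapply PL_mp; [apply PL_K | auto].
    + apply PL_ded. apply (PL_mp _ p2); [now apply PL_weak_cons|].
      apply (PL_mp _ p1); [apply PL_hyp; simpl; auto | now apply PL_weak_cons].
    + eapply PL_mp; [apply PL_K | auto].
    + apply PL_ded. eapply PL_mp; [apply PL_efq|].
      apply (PL_mp _ p1); [now apply PL_weak_cons | apply PL_hyp; simpl; auto].
  - apply PL_hyp. apply (in_map (fun a => signed (v a) a)). apply Hi; simpl; auto.
Qed.

Definition set_val (v : form -> bool) (a : form) (b : bool) : form -> bool :=
  fun c => if form_eq_dec c a then b else v c.

(* Case analysis on the truth value of each atom in turn. *)
Lemma PL_elim_atoms p L :
  (forall v, PL (map (fun a => signed (v a) a) L) p) -> PL [] p.
Proof.
  induction L as [|a L IH]; intros H; [apply (H (fun _ => true))|].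
  apply IH. intros v.
  destruct (in_dec form_eq_dec a L) as [Hin | Hin].
  - eapply PL_weak; [apply (H v)|]. intros x [<- | Hx]; [apply (in_map (fun c => signed (v c) c))|]; auto.
  - assert (E : forall b, map (fun c => signed (set_val v a b c) c) L
                          = map (fun c => signed (v c) c) L).
    { intro b. apply map_ext_in. intros c Hc. unfold set_val.
      destruct (form_eq_dec c a); subst; tauto. }
    apply (PL_cases _ a).
    + specialize (H (set_val v a true)). simpl in H. rewrite E in H.
      unfold set_val at 1 in H. destruct (form_eq_dec a a); [exact H | congruence].
    + specialize (H (set_val v a false)). simpl in H. rewrite E in H.
      unfold set_val at 1 in H. destruct (form_eq_dec a a); [exact H | congruence].
Qed.

Lemma taut_PL p : tautology p -> PL [] p.
Proof.
  intro Ht. apply (PL_elim_atoms p (atoms p)). intros v.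
  pose proof (kalmar p (atoms p) v (incl_refl _)) as K. rewrite Ht in K. exact K.
Qed.

Lemma Prov_mono T p : Prov T p -> forall T', (forall q, T q -> T' q) -> Prov T' p.
Proof.
  induction 1; intros T' HT; try (constructor; auto; fail).
  - eapply P_mp; eauto.
  - apply P_gen, IHProv. intros q [q' [H1 ->]]. exists q'; auto.
Qed.

Lemma taut_Prov T p : tautology p -> Prov T p.
Proof.
  intro H. apply taut_PL in H.
  induction H; [destruct H | apply P_K | apply P_S | apply P_DNE | eapply P_mp; eauto].
Qed.

Ltac solve_taut :=
  let v := fresh "v" in intro v;
  unfold fex, fiff, fand, for_, fle, fshift, inst in *; unfold fneg in *; simpl;
  repeat match goal with
         | |- context [ev v ?a] => destruct (ev v a)
         | |- context [v ?a] => destruct (v a)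
         end; reflexivity.

Lemma taut_mp1 T a c : tautology (fimp a c) -> Prov T a -> Prov T c.
Proof. intros H1 H2. eapply P_mp; [apply taut_Prov, H1 | exact H2]. Qed.

Lemma taut_mp2 T a b c : tautology (fimp a (fimp b c)) -> Prov T a -> Prov T b -> Prov T c.
Proof. intros H1 H2 H3. eapply P_mp; [eapply taut_mp1; eauto | exact H3]. Qed.

Lemma taut_mp3 T a b c d : tautology (fimp a (fimp b (fimp c d))) ->
  Prov T a -> Prov T b -> Prov T c -> Prov T d.
Proof. intros H1 H2 H3 H4. eapply P_mp; [eapply taut_mp2; eauto | exact H4]. Qed.

Lemma taut_mp4 T a b c d e : tautology (fimp a (fimp b (fimp c (fimp d e)))) ->
  Prov T a -> Prov T b -> Prov T c -> Prov T d -> Prov T e.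
Proof. intros H1 H2 H3 H4 H5. eapply P_mp; [eapply taut_mp3; eauto | exact H5]. Qed.

Lemma taut_mp5 T a b c d e f : tautology (fimp a (fimp b (fimp c (fimp d (fimp e f))))) ->
  Prov T a -> Prov T b -> Prov T c -> Prov T d -> Prov T e -> Prov T f.
Proof. intros H1 H2 H3 H4 H5 H6. eapply P_mp; [eapply taut_mp4; eauto | exact H6]. Qed.

Lemma imp_trans T a b c : Prov T (fimp a b) -> Prov T (fimp b c) -> Prov T (fimp a c).
Proof. apply taut_mp2. solve_taut. Qed.

Definition closed_theory (T : theory) := forall p, T p -> sentence p.

Lemma gen T p : closed_theory T -> Prov T p -> Prov T (fall p).
Proof.
  intros HT H. apply P_gen. eapply Prov_mono; eauto. intros q Hq. exists q.
  split; auto. symmetry; apply sentence_shift; auto.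
Qed.

Lemma all_inst T p t : Prov T (fall p) -> Prov T (inst t p).
Proof. apply P_mp, P_inst. Qed.

Lemma fex_intro T p t : Prov T (fimp (inst t p) (fex p)).
Proof.
  pose proof (P_inst T (fneg p) t) as H. unfold inst in *. simpl in H.
  refine (taut_mp1 _ _ _ _ H). solve_taut.
Qed.

Lemma ex_elim T p c : closed_theory T ->
  Prov T (fimp p (fshift c)) -> Prov T (fimp (fex p) c).
Proof.
  intros HT H.
  assert (H1 : Prov T (fall (fimp (fshift (fneg c)) (fneg p)))).
  { apply gen; auto. unfold fshift at 1. simpl. refine (taut_mp1 _ _ _ _ H). solve_taut. }
  pose proof (P_mp _ _ _ (P_allimp T (fneg c) (fneg p)) H1) as H2.
  refine (taut_mp1 _ _ _ _ H2). solve_taut.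
Qed.

Lemma deduction_gen T' p : Prov T' p -> forall T a,
  (forall q, T' q -> T q \/ q = a) -> closed_theory T -> sentence a ->
  Prov T (fimp a p).
Proof.
  induction 1; intros T0 a HT' HT Ha;
    try (eapply P_mp; [apply P_K | constructor]; fail).
  - destruct (HT' p H) as [H1 | ->].
    + eapply P_mp; [apply P_K | apply P_hyp; auto].
    + apply taut_Prov. solve_taut.
  - eapply P_mp; [eapply P_mp; [apply P_S|] |]; eauto.
  - assert (IH : Prov T0 (fimp a p)).
    { apply IHProv; auto. intros q [q' [Hq' ->]].
      destruct (HT' q' Hq') as [H1 | ->]; rewrite sentence_shift; auto. }
    eapply P_mp; [apply P_allimp|]. apply gen; auto. rewrite sentence_shift; auto.
Qed.

Lemma deduction T a p : closed_theory T -> sentence a ->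
  Prov (extend T a) p -> Prov T (fimp a p).
Proof. intros HT Ha H. eapply deduction_gen; eauto. Qed.

Lemma extend_hyp T a : Prov (extend T a) a.
Proof. apply P_hyp. right; auto. Qed.

Lemma extend_lift T a p : Prov T p -> Prov (extend T a) p.
Proof. intro H. eapply Prov_mono; eauto. intros; left; auto. Qed.

Lemma refute_of_inconsistent T a : closed_theory T -> sentence a ->
  ~ Consistent (extend T a) -> Prov T (fneg a).
Proof. intros HT Ha H. apply NNPP in H. apply deduction; auto. Qed.

(** * Equality *)

Definition upd (s : nat -> term) k t : nat -> term :=
  fun n => if n =? k then t else s n.

Lemma leib_at T t s sg k p :
  Prov T (fimp (feq t s) (fimp (fsubst (upd sg k t) p) (fsubst (upd sg k s) p))).
Proof.
  pose (p' := fsubst (fun n => if n =? k then tvar 0 else tshift (sg n)) p).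
  pose proof (P_leib T t s p') as H. unfold p', inst in H. rewrite !fsubst_comp in H.
  assert (E : forall u, fsubst (fun n => tsubst (scons u tvar)
                          (if n =? k then tvar 0 else tshift (sg n))) p
                        = fsubst (upd sg k u) p).
  { intro u. apply fsubst_ext. intro n; unfold upd; destruct (n =? k); simpl; auto.
    apply tsubst_scons_shift. }
  rewrite !E in H. exact H.
Qed.

Lemma leib_rule T t s sg k p :
  Prov T (feq t s) -> Prov T (fsubst (upd sg k t) p) -> Prov T (fsubst (upd sg k s) p).
Proof. intros H1 H2. eapply P_mp; [eapply P_mp; [apply leib_at | exact H1] | exact H2]. Qed.

Lemma leib_scons0 T t s sg A :
  Prov T (fimp (feq t s) (fimp (fsubst (scons t sg) A) (fsubst (scons s sg) A))).
Proof.
  pose proof (leib_at T t s (scons tzero sg) 0 A) as H.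
  rewrite (fsubst_ext A (upd _ 0 t) (scons t sg)), (fsubst_ext A (upd _ 0 s) (scons s sg)) in H.
  exact H. all: intros [|n]; reflexivity.
Qed.

Lemma leib_scons1 T t s a sg A :
  Prov T (fimp (feq t s)
    (fimp (fsubst (scons a (scons t sg)) A) (fsubst (scons a (scons s sg)) A))).
Proof.
  pose proof (leib_at T t s (scons a (scons tzero sg)) 1 A) as H.
  rewrite (fsubst_ext A (upd _ 1 t) (scons a (scons t sg))),
          (fsubst_ext A (upd _ 1 s) (scons a (scons s sg))) in H.
  exact H. all: intros [|[|n]]; reflexivity.
Qed.

Lemma eq_sym T t s : Prov T (fimp (feq t s) (feq s t)).
Proof.
  pose proof (leib_at T t s (fun n => t) 0 (feq (tvar 0) (tvar 1))) as H.
  unfold upd in H; simpl in H.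
  refine (taut_mp2 _ _ _ _ _ H (P_refl T t)). solve_taut.
Qed.

Lemma eq_sym_rule T t s : Prov T (feq t s) -> Prov T (feq s t).
Proof. apply P_mp, eq_sym. Qed.

Lemma eq_trans T t s u : Prov T (fimp (feq t s) (fimp (feq s u) (feq t u))).
Proof.
  pose proof (leib_at T s t (fun n => u) 0 (feq (tvar 0) (tvar 1))) as H.
  unfold upd in H; simpl in H.
  refine (taut_mp2 _ _ _ _ _ H (eq_sym T t s)). solve_taut.
Qed.

Lemma eq_trans_rule T t s u : Prov T (feq t s) -> Prov T (feq s u) -> Prov T (feq t u).
Proof. intros; eapply P_mp; [eapply P_mp; [apply eq_trans|] |]; eauto. Qed.

Lemma cong_succ T t s : Prov T (feq t s) -> Prov T (feq (tsucc t) (tsucc s)).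
Proof.
  intro H.
  pose proof (leib_at T t s (fun n => t) 0 (feq (tsucc (tvar 1)) (tsucc (tvar 0)))) as H1.
  unfold upd in H1; simpl in H1.
  refine (taut_mp3 _ _ _ _ _ _ H1 H (P_refl T (tsucc t))). solve_taut.
Qed.

Lemma cong_binary (op : term -> term -> term)
  (Hop : forall s a b, tsubst s (op a b) = op (tsubst s a) (tsubst s b)) T t1 s1 t2 s2 :
  Prov T (feq t1 s1) -> Prov T (feq t2 s2) -> Prov T (feq (op t1 t2) (op s1 s2)).
Proof.
  intros H1 H2.
  pose proof (leib_rule T t1 s1 (fun n => match n with 2 => t1 | _ => t2 end) 0
                (feq (op (tvar 2) (tvar 3)) (op (tvar 0) (tvar 1))) H1) as A.
  cbn [fsubst] in A. rewrite !Hop in A. unfold upd in A; simpl in A.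
  specialize (A (P_refl _ _)).
  pose proof (leib_rule T t2 s2 (fun n => match n with 1 => s1 | 2 => t1 | _ => t2 end) 0
                (feq (op (tvar 2) (tvar 3)) (op (tvar 1) (tvar 0))) H2) as B.
  cbn [fsubst] in B. rewrite !Hop in B. unfold upd in B; simpl in B. exact (B A).
Qed.

Lemma cong_plus T t1 s1 t2 s2 :
  Prov T (feq t1 s1) -> Prov T (feq t2 s2) -> Prov T (feq (tplus t1 t2) (tplus s1 s2)).
Proof. apply cong_binary. reflexivity. Qed.

Lemma cong_mult T t1 s1 t2 s2 :
  Prov T (feq t1 s1) -> Prov T (feq t2 s2) -> Prov T (feq (tmult t1 t2) (tmult s1 s2)).
Proof. apply cong_binary. reflexivity. Qed.

(** * Robinson's R *)

Definition extends_R (T : theory) := forall p, R_axiom p -> Prov T p.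

Fixpoint teval (e : nat -> nat) (t : term) : nat :=
  match t with
  | tvar n => e n
  | tzero => 0
  | tsucc u => S (teval e u)
  | tplus u v => teval e u + teval e v
  | tmult u v => teval e u * teval e v
  end.

Lemma teval_ext t : forall e1 e2, (forall n, e1 n = e2 n) -> teval e1 t = teval e2 t.
Proof. induction t; simpl; intros; auto. Qed.

Lemma teval_subst t : forall e s, teval e (tsubst s t) = teval (fun n => teval e (s n)) t.
Proof. induction t; simpl; intros; auto. Qed.

Lemma teval_shift e y t : teval (scons y e) (tshift t) = teval e t.
Proof. unfold tshift. rewrite teval_subst. apply teval_ext. reflexivity. Qed.

Definition nums (e : nat -> nat) : nat -> term := fun n => num (e n).

Lemma tsubst_nums_closed s e t : tsubst s (tsubst (nums e) t) = tsubst (nums e) t.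
Proof. rewrite tsubst_comp. apply tsubst_ext. intro; apply tsubst_num. Qed.

Fixpoint bigor_t (t : term) (n : nat) : form :=
  match n with
  | 0 => feq t (num 0)
  | S k => for_ (bigor_t t k) (feq t (num (S k)))
  end.

Lemma bigor_subst s n : fsubst s (bigor_eq n) = bigor_t (s 0) n.
Proof.
  induction n; simpl; rewrite ?tsubst_num; auto.
  unfold for_, fneg in *. simpl. rewrite IHn, ?tsubst_num. auto.
Qed.

Lemma bigor_elim T t n X : (forall i, i <= n -> Prov T (fimp (feq t (num i)) X)) ->
  Prov T (fimp (bigor_t t n) X).
Proof.
  induction n; intro H; simpl; [apply (H 0); auto|].
  refine (taut_mp2 _ _ _ _ _ (IHn (fun i Hi => H i ltac:(lia))) (H (S n) (le_n _))).
  solve_taut.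
Qed.

Section RobinsonR.
Variable T : theory.
Hypothesis HR : extends_R T.

Lemma R_term_eval e t : Prov T (feq (tsubst (nums e) t) (num (teval e t))).
Proof.
  induction t; simpl; try apply P_refl.
  - apply cong_succ; auto.
  - eapply eq_trans_rule; [apply cong_plus; eauto|]. apply HR. left. eauto.
  - eapply eq_trans_rule; [apply cong_mult; eauto|]. apply HR. right; left. eauto.
Qed.

Lemma R_le_num t n : Prov T (fimp (fle t (num n)) (bigor_t t n)).
Proof.
  assert (A : R_axiom (fall (fimp (fle (tvar 0) (num n)) (bigor_eq n)))) by (do 3 right; left; eauto).
  pose proof (all_inst T _ t (HR _ A)) as H.
  unfold inst in H. cbn [fsubst] in H. rewrite fle_subst, bigor_subst in H. simpl in H.
  rewrite tsubst_num in H. exact H.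
Qed.

Lemma R_le_total t n : Prov T (for_ (fle t (num n)) (fle (num n) t)).
Proof.
  assert (A : R_axiom (fall (for_ (fle (tvar 0) (num n)) (fle (num n) (tvar 0)))))
    by (do 4 right; eauto).
  pose proof (all_inst T _ t (HR _ A)) as H.
  unfold inst, for_, fneg in H. cbn [fsubst] in H. rewrite !fle_subst in H. simpl in H.
  rewrite !tsubst_num in H. exact H.
Qed.

Lemma R_num_neq a b : a <> b -> Prov T (fneg (feq (num a) (num b))).
Proof. intros H. apply HR. right; right; left. eauto. Qed.

Lemma R_num_le i n : i <= n -> Prov T (fle (num i) (num n)).
Proof.
  intros Hi.
  pose proof (fex_intro T (feq (tplus (tvar 0) (tshift (num i))) (tshift (num n))) (num (n - i))) as H.
  unfold inst in H. simpl in H. rewrite !tshift_num, !tsubst_num in H.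
  eapply P_mp; [unfold fle; rewrite !tshift_num; exact H|].
  replace n with (n - i + i) at 2 by lia. apply HR. left; eauto.
Qed.

Lemma R_bigor_false a n : n < a -> Prov T (fneg (bigor_t (num a) n)).
Proof.
  intros H. induction n; simpl; [apply (R_num_neq a 0); lia|].
  refine (taut_mp2 _ _ _ _ _ (IHn ltac:(lia)) (R_num_neq a (S n) ltac:(lia))). solve_taut.
Qed.

Lemma R_num_not_le a b : b < a -> Prov T (fneg (fle (num a) (num b))).
Proof.
  intros H. refine (taut_mp2 _ _ _ _ _ (R_le_num (num a) b) (R_bigor_false a b H)). solve_taut.
Qed.

End RobinsonR.

(** * Completeness of R for bounded sentences *)

Inductive delta0 : Type :=
| DEq : term -> term -> delta0
| DLe : term -> term -> delta0
| DNeg : delta0 -> delta0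
| DImp : delta0 -> delta0 -> delta0
| DAnd : delta0 -> delta0 -> delta0
| DAll : term -> delta0 -> delta0
| DEx : term -> delta0 -> delta0.

(* The bound [t] of [DAll t a] and [DEx t a] lives outside the new binder. *)
Fixpoint d0_form (a : delta0) : form :=
  match a with
  | DEq t s => feq t s
  | DLe t s => fle t s
  | DNeg b => fneg (d0_form b)
  | DImp b c => fimp (d0_form b) (d0_form c)
  | DAnd b c => fand (d0_form b) (d0_form c)
  | DAll t b => fall (fimp (fle (tvar 0) (tshift t)) (d0_form b))
  | DEx t b => fneg (fall (fimp (fle (tvar 0) (tshift t)) (fneg (d0_form b))))
  end.

Fixpoint d0_holds (e : nat -> nat) (a : delta0) : Prop :=
  match a with
  | DEq t s => teval e t = teval e s
  | DLe t s => teval e t <= teval e s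
  | DNeg b => ~ d0_holds e b
  | DImp b c => d0_holds e b -> d0_holds e c
  | DAnd b c => d0_holds e b /\ d0_holds e c
  | DAll t b => forall y, y <= teval e t -> d0_holds (scons y e) b
  | DEx t b => exists y, y <= teval e t /\ d0_holds (scons y e) b
  end.

Fixpoint d0_holdsb (e : nat -> nat) (a : delta0) : bool :=
  match a with
  | DEq t s => Nat.eqb (teval e t) (teval e s)
  | DLe t s => Nat.leb (teval e t) (teval e s)
  | DNeg b => negb (d0_holdsb e b)
  | DImp b c => implb (d0_holdsb e b) (d0_holdsb e c)
  | DAnd b c => andb (d0_holdsb e b) (d0_holdsb e c)
  | DAll t b => forallb (fun y => d0_holdsb (scons y e) b) (seq 0 (S (teval e t)))
  | DEx t b => existsb (fun y => d0_holdsb (scons y e) b) (seq 0 (S (teval e t)))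
  end.

Lemma d0_holdsb_spec a : forall e, d0_holdsb e a = true <-> d0_holds e a.
Proof.
  induction a; intro e; cbn [d0_holdsb d0_holds].
  - apply Nat.eqb_eq.
  - apply Nat.leb_le.
  - rewrite negb_true_iff, <- IHa. destruct (d0_holdsb e a); split; congruence.
  - rewrite <- IHa1, <- IHa2.
    destruct (d0_holdsb e a1), (d0_holdsb e a2); simpl; intuition congruence.
  - rewrite andb_true_iff, IHa1, IHa2. tauto.
  - rewrite forallb_forall. setoid_rewrite in_seq. setoid_rewrite IHa.
    split; intros H y Hy; apply H; lia.
  - rewrite existsb_exists. setoid_rewrite in_seq. setoid_rewrite IHa.
    split; intros [y [Hy H]]; exists y; split; auto; lia.
Qed.

Lemma d0_holdsb_false e a : d0_holdsb e a = false <-> ~ d0_holds e a.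
Proof. rewrite <- d0_holdsb_spec. destruct (d0_holdsb e a); intuition congruence. Qed.

Fixpoint d0_subst (s : nat -> term) (a : delta0) : delta0 :=
  match a with
  | DEq t u => DEq (tsubst s t) (tsubst s u)
  | DLe t u => DLe (tsubst s t) (tsubst s u)
  | DNeg b => DNeg (d0_subst s b)
  | DImp b c => DImp (d0_subst s b) (d0_subst s c)
  | DAnd b c => DAnd (d0_subst s b) (d0_subst s c)
  | DAll t b => DAll (tsubst s t) (d0_subst (up s) b)
  | DEx t b => DEx (tsubst s t) (d0_subst (up s) b)
  end.

Lemma d0_form_subst a : forall s, d0_form (d0_subst s a) = fsubst s (d0_form a).
Proof.
  induction a; intro s; cbn [d0_form d0_subst fsubst]; rewrite ?fle_subst, ?IHa, ?IHa1, ?IHa2;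
    auto; unfold fand, fneg; cbn [fsubst]; rewrite ?fle_subst; simpl; rewrite ?tsubst_up_shift; auto.
Qed.

Lemma d0_holds_ext a : forall e1 e2, (forall n, e1 n = e2 n) -> (d0_holds e1 a <-> d0_holds e2 a).
Proof.
  assert (Hs : forall (e1 e2 : nat -> nat) y,
            (forall n, e1 n = e2 n) -> forall n, scons y e1 n = scons y e2 n)
    by (intros e1 e2 y H [|n]; simpl; auto).
  induction a; intros e1 e2 H; cbn [d0_holds]; rewrite ?(teval_ext t e1 e2 H), ?(teval_ext t0 e1 e2 H);
    try rewrite (IHa e1 e2 H); try rewrite (IHa1 e1 e2 H), (IHa2 e1 e2 H); try tauto.
  - split; intros H1 y Hy; (eapply IHa; [|apply H1, Hy]); apply Hs; auto.
  - split; intros [y [Hy H1]]; exists y; split; auto; (eapply IHa; [|exact H1]); apply Hs; auto.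
Qed.

Lemma d0_holds_subst a : forall e s,
  d0_holds e (d0_subst s a) <-> d0_holds (fun n => teval e (s n)) a.
Proof.
  assert (E : forall e (s : nat -> term) y n,
            teval (scons y e) (up s n) = scons y (fun n => teval e (s n)) n)
    by (intros e s y [|n]; [reflexivity | apply teval_shift]).
  induction a; intros e s; cbn [d0_holds d0_subst]; rewrite ?teval_subst; try tauto.
  - rewrite IHa. tauto.
  - rewrite IHa1, IHa2. tauto.
  - rewrite IHa1, IHa2. tauto.
  - split; intros H1 y Hy; specialize (H1 y Hy); rewrite IHa in *;
      (eapply d0_holds_ext; [|exact H1]); intro n; simpl; rewrite E; auto.
  - split; intros [y [Hy H1]]; exists y; split; auto; rewrite IHa in *;
      (eapply d0_holds_ext; [|exact H1]); intro n; simpl; rewrite E; auto.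
Qed.

Lemma fsubst_d0_all s t a : fsubst s (d0_form (DAll t a)) =
  fall (fimp (fle (tvar 0) (tshift (tsubst s t))) (fsubst (up s) (d0_form a))).
Proof. cbn [d0_form fsubst]. rewrite fle_subst, tsubst_up_shift. reflexivity. Qed.

Lemma fsubst_d0_ex s t a : fsubst s (d0_form (DEx t a)) =
  fneg (fall (fimp (fle (tvar 0) (tshift (tsubst s t))) (fsubst (up s) (fneg (d0_form a))))).
Proof. cbn [d0_form]. unfold fneg. cbn [fsubst]. rewrite fle_subst, tsubst_up_shift. reflexivity. Qed.

Lemma inst_up_nums e A i : inst (num i) (fsubst (up (nums e)) A) = fsubst (nums (scons i e)) A.
Proof. rewrite inst_up. apply fsubst_ext. intros [|n]; reflexivity. Qed.

Section BoundedCompleteness.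
Variable T : theory.
Hypothesis HR : extends_R T.
Hypothesis HT : closed_theory T.

Lemma R_bounded_all e t A :
  ((forall i, i <= teval e t -> Prov T (fsubst (nums (scons i e)) A)) ->
    Prov T (fall (fimp (fle (tvar 0) (tshift (tsubst (nums e) t))) (fsubst (up (nums e)) A)))) /\
  (forall i, i <= teval e t -> Prov T (fneg (fsubst (nums (scons i e)) A)) ->
    Prov T (fneg (fall (fimp (fle (tvar 0) (tshift (tsubst (nums e) t))) (fsubst (up (nums e)) A))))).
Proof.
  set (tau := tsubst (nums e) t).
  assert (Ht : tshift tau = tau) by apply tsubst_nums_closed. rewrite Ht.
  assert (Hev : Prov T (feq tau (num (teval e t)))) by apply R_term_eval, HR.
  set (n := teval e t) in *. split.
  - intros H. apply gen; auto.
    pose proof (leib_at T tau (num n) (fun k => tvar (pred k)) 0 (fle (tvar 1) (tvar 0))) as L1.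
    rewrite !fle_subst in L1. unfold upd in L1. simpl in L1.
    assert (L2 : Prov T (fimp (bigor_t (tvar 0) n) (fsubst (up (nums e)) A))).
    { apply bigor_elim. intros i Hi.
      pose proof (leib_scons0 T (num i) (tvar 0) (fun k => tshift (nums e k)) A) as L3.
      rewrite (fsubst_ext A (scons (num i) _) (nums (scons i e))) in L3
        by (intros [|k]; [reflexivity | apply tshift_num]).
      change (scons (tvar 0) _) with (up (nums e)) in L3.
      refine (taut_mp3 _ _ _ _ _ _ L3 (eq_sym T (tvar 0) (num i)) (H i Hi)). solve_taut. }
    refine (taut_mp4 _ _ _ _ _ _ _ L1 Hev (R_le_num T HR (tvar 0) n) L2). solve_taut.
  - intros i Hi H.
    pose proof (P_inst T (fimp (fle (tvar 0) tau) (fsubst (up (nums e)) A)) (num i)) as L1.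
    change (inst (num i) (fimp ?P ?Q)) with (fimp (inst (num i) P) (inst (num i) Q)) in L1.
    rewrite inst_up_nums in L1. unfold inst in L1. rewrite fle_subst in L1. simpl in L1.
    unfold tau in L1. rewrite tsubst_nums_closed in L1. fold tau in L1.
    pose proof (leib_at T (num n) tau (fun k => num i) 0 (fle (tvar 1) (tvar 0))) as L2.
    rewrite !fle_subst in L2. unfold upd in L2. simpl in L2.
    pose proof (P_mp _ _ _ (P_mp _ _ _ L2 (eq_sym_rule _ _ _ Hev)) (R_num_le T HR i n Hi)) as L4.
    refine (taut_mp3 _ _ _ _ _ _ L1 L4 H). clear. solve_taut.
Qed.

Definition decided (a : delta0) (e : nat -> nat) :=
  (d0_holdsb e a = true -> Prov T (fsubst (nums e) (d0_form a))) /\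
  (d0_holdsb e a = false -> Prov T (fneg (fsubst (nums e) (d0_form a)))).

Lemma decided_eq e t s : decided (DEq t s) e.
Proof.
  unfold decided. cbn [d0_form d0_holdsb fsubst].
  pose proof (R_term_eval T HR e t) as H1. pose proof (R_term_eval T HR e s) as H2.
  set (t' := tsubst (nums e) t) in *. set (s' := tsubst (nums e) s) in *.
  split; intro H.
  - apply Nat.eqb_eq in H. rewrite H in H1. eapply eq_trans_rule; [exact H1 | apply eq_sym_rule, H2].
  - apply Nat.eqb_neq, (R_num_neq T HR) in H.
    pose proof (P_mp _ _ _ (eq_trans T (num (teval e t)) t' s') (eq_sym_rule _ _ _ H1)) as M.
    pose proof (eq_trans T (num (teval e t)) s' (num (teval e s))) as M'.
    refine (taut_mp4 _ _ _ _ _ _ _ M M' H2 H). clear. solve_taut.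
Qed.

Lemma decided_le e t s : decided (DLe t s) e.
Proof.
  unfold decided. cbn [d0_form d0_holdsb]. rewrite fle_subst.
  pose proof (R_term_eval T HR e t) as H1. pose proof (R_term_eval T HR e s) as H2.
  set (t' := tsubst (nums e) t) in *. set (s' := tsubst (nums e) s) in *.
  pose proof (leib_at T (num (teval e t)) t' (fun k => num (teval e s)) 0 (fle (tvar 0) (tvar 1))) as L1.
  pose proof (leib_at T (num (teval e s)) s' (fun k => t') 0 (fle (tvar 1) (tvar 0))) as L2.
  pose proof (leib_at T t' (num (teval e t)) (fun k => s') 0 (fle (tvar 0) (tvar 1))) as L3.
  pose proof (leib_at T s' (num (teval e s)) (fun k => num (teval e t)) 0 (fle (tvar 1) (tvar 0))) as L4.
  rewrite !fle_subst in L1, L2, L3, L4. unfold upd in L1, L2, L3, L4. simpl in L1, L2, L3, L4.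
  split; intro H.
  - apply Nat.leb_le, (R_num_le T HR) in H.
    exact (P_mp _ _ _ (P_mp _ _ _ L2 (eq_sym_rule _ _ _ H2))
                      (P_mp _ _ _ (P_mp _ _ _ L1 (eq_sym_rule _ _ _ H1)) H)).
  - apply Nat.leb_gt, (R_num_not_le T HR) in H.
    refine (taut_mp3 _ _ _ _ _ _ (P_mp _ _ _ L3 H1) (P_mp _ _ _ L4 H2) H). clear. solve_taut.
Qed.

Lemma forallb_false_ex {A} (f : A -> bool) l :
  forallb f l = false -> exists x, In x l /\ f x = false.
Proof.
  induction l as [|a l IH]; simpl; [discriminate|].
  destruct (f a) eqn:E; simpl; intro H; eauto. destruct (IH H) as [x [H1 H2]]; eauto.
Qed.

Lemma decided_all e t a : (forall e, decided a e) -> decided (DAll t a) e.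
Proof.
  intro IH. unfold decided. rewrite fsubst_d0_all. cbn [d0_holdsb].
  destruct (R_bounded_all e t (d0_form a)) as [B1 B2]. split; intro H.
  - apply B1. intros i Hi. apply IH.
    rewrite forallb_forall in H. apply H, in_seq. lia.
  - destruct (forallb_false_ex _ _ H) as [i [Hi Hf]]. apply in_seq in Hi.
    apply (B2 i ltac:(lia)), IH, Hf.
Qed.

Lemma decided_ex e t a : (forall e, decided a e) -> decided (DEx t a) e.
Proof.
  intro IH. unfold decided. rewrite fsubst_d0_ex. cbn [d0_holdsb].
  destruct (R_bounded_all e t (fneg (d0_form a))) as [B1 B2]. split; intro H.
  - apply existsb_exists in H. destruct H as [i [Hi Hf]]. apply in_seq in Hi.
    apply (B2 i ltac:(lia)). cbn [fsubst].
    refine (taut_mp1 _ _ _ _ (proj1 (IH (scons i e)) Hf)). solve_taut.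
  - refine (taut_mp1 _ _ _ _ (B1 _)); [solve_taut|]. intros i Hi. cbn [fsubst].
    apply IH. destruct (d0_holdsb (scons i e) a) eqn:E; auto.
    enough (existsb (fun y => d0_holdsb (scons y e) a) (seq 0 (S (teval e t))) = true) by congruence.
    apply existsb_exists. exists i. split; auto. apply in_seq. lia.
Qed.

Lemma d0_decided a : forall e, decided a e.
Proof.
  induction a; intro e; auto using decided_eq, decided_le, decided_all, decided_ex;
    unfold decided in *; cbn [d0_form d0_holdsb];
    try (destruct (IHa e) as [I1 I2]); try (destruct (IHa1 e) as [I1 I2], (IHa2 e) as [J1 J2]);
    unfold fand, fneg in *; cbn [fsubst] in *.
  - destruct (d0_holdsb e a); simpl; split; intro H; try discriminate; auto.
    refine (taut_mp1 _ _ _ _ (I1 eq_refl)). solve_taut.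
  - destruct (d0_holdsb e a1), (d0_holdsb e a2); simpl; split; intro H; try discriminate.
    + refine (taut_mp1 _ _ _ _ (J1 eq_refl)). solve_taut.
    + refine (taut_mp2 _ _ _ _ _ (I1 eq_refl) (J2 eq_refl)). solve_taut.
    + refine (taut_mp1 _ _ _ _ (J1 eq_refl)). solve_taut.
    + refine (taut_mp1 _ _ _ _ (I2 eq_refl)). solve_taut.
  - destruct (d0_holdsb e a1), (d0_holdsb e a2); simpl; split; intro H; try discriminate.
    + refine (taut_mp2 _ _ _ _ _ (I1 eq_refl) (J1 eq_refl)). solve_taut.
    + refine (taut_mp1 _ _ _ _ (J2 eq_refl)). solve_taut.
    + refine (taut_mp1 _ _ _ _ (I2 eq_refl)). solve_taut.
    + refine (taut_mp1 _ _ _ _ (I2 eq_refl)). solve_taut.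
Qed.

Lemma d0_true e a : d0_holds e a -> Prov T (fsubst (nums e) (d0_form a)).
Proof. intros H. apply d0_decided, d0_holdsb_spec, H. Qed.

Lemma d0_false e a : ~ d0_holds e a -> Prov T (fneg (fsubst (nums e) (d0_form a))).
Proof. intros H. apply d0_decided, d0_holdsb_false, H. Qed.

End BoundedCompleteness.

(** * Cantor pairing and coded sequences *)

Fixpoint tri (s : nat) : nat := match s with 0 => 0 | S k => tri k + S k end.

Lemma tri_spec s : s * (s + 1) = 2 * tri s.
Proof. induction s; simpl; lia. Qed.

Lemma tri_mono s s' : s <= s' -> tri s <= tri s'.
Proof. induction 1; simpl; lia. Qed.

Lemma tri_lt s s' : s < s' -> tri s + s < tri s'.
Proof. induction 1; simpl; lia. Qed.

Lemma pair_tri a b : pair a b = tri (a + b) + b.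
Proof. unfold pair. rewrite tri_spec, (Nat.mul_comm 2), Nat.div_mul; lia. Qed.

(* The division-free form of [x = pair a b] that a bounded formula can express. *)
Lemma pair_double_iff x a b : x + x = (a + b) * S (a + b) + (b + b) <-> x = pair a b.
Proof. rewrite pair_tri. pose proof (tri_spec (a + b)). rewrite Nat.add_1_r in H. lia. Qed.

Lemma pair_inj a b a' b' : pair a b = pair a' b' -> a = a' /\ b = b'.
Proof.
  rewrite !pair_tri. intro H.
  assert (a + b = a' + b').
  { destruct (Nat.lt_trichotomy (a + b) (a' + b')) as [L | [L | L]]; auto;
      pose proof (tri_lt _ _ L); lia. }
  rewrite H0 in H. lia.
Qed.

Lemma pair_ge_l a b : a <= pair a b.
Proof.
  rewrite pair_tri. pose proof (tri_mono a (a + b)).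
  assert (a <= tri a) by (induction a; simpl; lia). lia.
Qed.

Lemma pair_ge_r a b : b <= pair a b.
Proof. rewrite pair_tri. lia. Qed.

Lemma pair_mono a b a' b' : a <= a' -> b <= b' -> pair a b <= pair a' b'.
Proof. intros. rewrite !pair_tri. pose proof (tri_mono (a + b) (a' + b')). lia. Qed.

Definition num_code (n : nat) : nat := code_term (num n).

Lemma num_code_S n : num_code (S n) = pair 2 (num_code n).
Proof. reflexivity. Qed.

Lemma num_code_lt n : num_code n < num_code (S n).
Proof. rewrite num_code_S, pair_tri. simpl. lia. Qed.

Lemma num_code_mono n m : n <= m -> num_code n <= num_code m.
Proof. induction 1; auto. pose proof (num_code_lt m). lia. Qed.

(* Goedel's coding of finite sets: [v] belongs to the set coded by [(K, P)]
   when the modulus [1 + (v + 1) K] divides [P]. *)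
Definition coded_in (K P v : nat) := exists q, q <= P /\ q * S ((v + 1) * K) = P.

Definition chain_closed (K P Z : nat) :=
  forall i, i <= Z -> forall u, u <= Z -> forall v, v <= Z ->
    v = pair i u -> coded_in K P v -> v <> Z ->
    exists r, r <= Z /\ exists v', v' <= Z /\ r = pair 2 u /\ v' = pair (S i) r /\ coded_in K P v'.

(* The coded set contains [(0, <0>)] and is closed, below [Z], under
   [(i, u) |-> (i + 1, <S u>)]; since the pairs [(k, <k>)] grow without bound,
   one of them is [Z]. *)
Lemma chain_num_code x z Z K P :
  Z = pair x z -> 2 <= Z -> coded_in K P 2 -> coded_in K P Z ->
  chain_closed K P Z ->
  z = num_code x.
Proof.
  intros HZ H2 HI2 HIZ Hstep.
  assert (Cl : forall k, (forall j, j < k -> pair j (num_code j) <> Z) ->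
                 coded_in K P (pair k (num_code k)) /\ pair k (num_code k) <= Z).
  { induction k as [|k IH]; intro Hj; [split; assumption|].
    destruct IH as [I1 I2]; [intros j Hj'; apply Hj; lia|].
    pose proof (pair_ge_l k (num_code k)). pose proof (pair_ge_r k (num_code k)).
    destruct (Hstep k ltac:(lia) (num_code k) ltac:(lia) (pair k (num_code k)) I2 eq_refl I1
                    (Hj k ltac:(lia)))
      as [r [_ [v' [R2 [-> [-> R5]]]]]].
    auto. }
  destruct (classic (exists j, pair j (num_code j) = Z)) as [[j Hj] | Hn].
  - rewrite HZ in Hj. apply pair_inj in Hj as [-> ->]. reflexivity.
  - destruct (Cl (S Z)) as [_ Hle]; [intros j _ E; apply Hn; eauto|].
    pose proof (pair_ge_l (S Z) (num_code (S Z))). lia.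
Qed.

Lemma divide_fact n N : 1 <= n -> n <= N -> Nat.divide n (fact N).
Proof.
  intros H1 H2. induction H2.
  - destruct n; [lia|]. exists (fact n). simpl. lia.
  - simpl. apply Nat.divide_add_r; auto. apply Nat.divide_mul_r. auto.
Qed.

Lemma moduli_coprime K Z u v : K = fact (S Z) -> u < v -> v <= Z ->
  Nat.gcd (S ((u + 1) * K)) (S ((v + 1) * K)) = 1.
Proof.
  intros HK Huv HvZ. set (d := Nat.gcd (S ((u + 1) * K)) (S ((v + 1) * K))).
  assert (D1 : Nat.divide d (S ((u + 1) * K))) by apply Nat.gcd_divide_l.
  assert (D2 : Nat.divide d (S ((v + 1) * K))) by apply Nat.gcd_divide_r.
  assert (D3 : Nat.divide d (v - u)).
  { replace (v - u) with ((v + 1) * S ((u + 1) * K) - (u + 1) * S ((v + 1) * K)) by nia.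
    apply Nat.divide_sub_r; apply Nat.divide_mul_r; auto. }
  assert (D4 : Nat.divide d K).
  { eapply Nat.divide_trans; [exact D3|]. rewrite HK. apply divide_fact; lia. }
  apply Nat.divide_1_r. replace 1 with (S ((u + 1) * K) - (u + 1) * K) by lia.
  apply Nat.divide_sub_r; auto. apply Nat.divide_mul_r; auto.
Qed.

Fixpoint prodf (f : nat -> nat) (n : nat) : nat :=
  match n with 0 => f 0 | S k => f (S k) * prodf f k end.

Lemma prodf_divide f n k : k <= n -> Nat.divide (f k) (prodf f n).
Proof.
  induction 1; [destruct k; simpl; [apply Nat.divide_refl | apply Nat.divide_mul_l, Nat.divide_refl]|].
  simpl. apply Nat.divide_mul_r. auto.
Qed.

Lemma prodf_pos f n : (forall k, 0 < f k) -> 0 < prodf f n.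
Proof. intro H. induction n; simpl; auto. specialize (H (S n)). nia. Qed.

Lemma prodf_coprime f n m : (forall k, k <= n -> Nat.gcd m (f k) = 1) ->
  Nat.divide m (prodf f n) -> m = 1.
Proof.
  intros H1 H2. apply Nat.divide_1_r. revert H1 H2. induction n; simpl; intros H1 H2.
  - apply (Nat.gauss _ (f 0)); [rewrite Nat.mul_1_r | apply H1]; auto.
  - apply IHn; [intros; apply H1; lia|]. apply (Nat.gauss _ (f (S n))); auto.
Qed.

(* The set [{(k, <k>) | k <= x}] as coded by [(chain_K x, chain_P x)]. *)
Definition chain_K x := fact (S (pair x (num_code x))).
Definition chain_factor x k := S ((pair k (num_code k) + 1) * chain_K x).
Definition chain_P x := prodf (chain_factor x) x.

Lemma chain_P_pos x : chain_P x <> 0.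
Proof. enough (0 < chain_P x) by lia. apply prodf_pos. intro; unfold chain_factor; lia. Qed.

Lemma chain_mem x v : v <= pair x (num_code x) ->
  (coded_in (chain_K x) (chain_P x) v <-> exists k, k <= x /\ v = pair k (num_code k)).
Proof.
  intro Hv. unfold coded_in. split.
  - intros [q [_ Hq]]. apply NNPP. intro E.
    assert (Hdiv : Nat.divide (S ((v + 1) * chain_K x)) (chain_P x)) by (exists q; lia).
    apply prodf_coprime in Hdiv.
    + pose proof (lt_O_fact (S (pair x (num_code x)))). unfold chain_K in Hdiv. nia.
    + intros k Hk. unfold chain_factor.
      assert (pair k (num_code k) <= pair x (num_code x))
        by (apply pair_mono; auto; apply num_code_mono; auto).
      destruct (Nat.lt_trichotomy v (pair k (num_code k))) as [L | [L | L]];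
        [| exfalso; apply E; eauto | rewrite Nat.gcd_comm];
        apply (moduli_coprime _ (pair x (num_code x))); auto; lia.
  - intros [k [Hk ->]]. destruct (prodf_divide (chain_factor x) x k Hk) as [q Hq].
    exists q. unfold chain_P. rewrite Hq. unfold chain_factor. split; [nia | reflexivity].
Qed.

(** * A bounded definition of the diagonal function *)

(* [diag_source K] and [diag_target z K] are the codes of [forall x0 (x0 = x1 -> th)]
   and [forall x0 (x0 = t -> th)] when [K] codes [th] and [z] codes [t]; [26] codes
   [x0 = x1]. *)
Definition diag_source K := pair 3 (pair 2 (pair 26 K)).
Definition diag_target z K := pair 3 (pair 2 (pair (pair 1 (pair 0 z)) K)).

Lemma code_diag_source th :
  code (fall (fimp (feq (tvar 0) (tvar 1)) th)) = diag_source (code th).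
Proof. reflexivity. Qed.


Definition DPair (a b c : term) : delta0 :=
  DEq (tplus a a) (tplus (tmult (tplus b c) (tsucc (tplus b c))) (tplus c c)).

Definition DCodedIn (v K P : term) : delta0 :=
  DEx P (DEq (tmult (tvar 0) (tsucc (tmult (tsucc (tshift v)) (tshift K)))) (tshift P)).

(* Free variables: 0 = w (bound on all witnesses), 1 = y, 2 = x.  In the scope of
   the five existentials, 0..4 = P, Kk, Z, z, K; see [diag_graph_spec]. *)
Definition diag_graph_witnesses : delta0 :=
  DEx (tvar 0) (DEx (tvar 1) (DEx (tvar 2) (DEx (tvar 3) (DEx (tvar 4)
   (DAnd (DEx (tvar 7) (DEx (tvar 8)
           (DAnd (DPair (tvar 1) (num 26) (tvar 6))
           (DAnd (DPair (tvar 0) (num 2) (tvar 1))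
                 (DPair (tvar 9) (num 3) (tvar 0))))))
   (DAnd (DEx (tvar 6) (DEx (tvar 7) (DEx (tvar 8) (DEx (tvar 9)
           (DAnd (DPair (tvar 3) (num 0) (tvar 7))
           (DAnd (DPair (tvar 2) (num 1) (tvar 3))
           (DAnd (DPair (tvar 1) (tvar 2) (tvar 8))
           (DAnd (DPair (tvar 0) (num 2) (tvar 1))
                 (DPair (tvar 10) (num 3) (tvar 0))))))))))
   (DAnd (DPair (tvar 2) (tvar 7) (tvar 3))
   (DAnd (DLe (num 2) (tvar 2))
   (DAnd (DNeg (DEq (tvar 0) tzero))
   (DAnd (DCodedIn (num 2) (tvar 1) (tvar 0))
   (DAnd (DCodedIn (tvar 2) (tvar 1) (tvar 0))
   (DAll (tvar 2) (DAll (tvar 3) (DAll (tvar 4)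
     (DImp (DPair (tvar 0) (tvar 2) (tvar 1))
     (DImp (DCodedIn (tvar 0) (tvar 4) (tvar 3))
     (DImp (DNeg (DEq (tvar 0) (tvar 5)))
       (DEx (tvar 5) (DEx (tvar 6)
         (DAnd (DPair (tvar 1) (num 2) (tvar 3))
         (DAnd (DPair (tvar 0) (tsucc (tvar 4)) (tvar 1))
               (DCodedIn (tvar 0) (tvar 6) (tvar 5))))))))))))
   ))))))))))).

Definition diag_graph : delta0 := DAnd (DLe (tvar 1) (tvar 0)) diag_graph_witnesses.

Definition env_wyx (w y x : nat) : nat -> nat := scons w (scons y (fun _ => x)).

Lemma d0_holds_DPair e a b c :
  d0_holds e (DPair a b c) <-> teval e a = pair (teval e b) (teval e c).
Proof. unfold DPair. cbn [d0_holds teval]. apply pair_double_iff. Qed.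

Lemma d0_holds_DCodedIn e v K P :
  d0_holds e (DCodedIn v K P) <-> coded_in (teval e K) (teval e P) (teval e v).
Proof.
  unfold DCodedIn, coded_in. cbn [d0_holds teval]. setoid_rewrite teval_shift. cbn [scons].
  split; intros [q [H1 H2]]; exists q; split; auto; rewrite <- H2; f_equal; f_equal; f_equal; lia.
Qed.

Lemma diag_graph_spec w y x : d0_holds (env_wyx w y x) diag_graph <->
  y <= w /\ exists K z Z Kk P, K <= w /\ z <= w /\ Z <= w /\ Kk <= w /\ P <= w /\
    x = diag_source K /\ y = diag_target z K /\ Z = pair x z /\ 2 <= Z /\ P <> 0 /\
    coded_in Kk P 2 /\ coded_in Kk P Z /\ chain_closed Kk P Z.
Proof.
  unfold diag_graph, diag_graph_witnesses, chain_closed, diag_source, diag_target.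
  cbn -[DPair DCodedIn pair]. setoid_rewrite d0_holds_DPair. setoid_rewrite d0_holds_DCodedIn.
  cbn -[pair]. split.
  - intros [Hyw [K [HK [z [Hz [Z [HZ [Kk [HKk [P [HP H]]]]]]]]]]].
    destruct H as [[a1 [_ [a2 [_ [-> [-> ->]]]]]]
                   [[b1 [_ [b2 [_ [b3 [_ [b4 [_ [-> [-> [-> [-> ->]]]]]]]]]]]] H]].
    split; [auto|]. exists K, z, Z, Kk, P. repeat split; try reflexivity; tauto.
  - intros [Hyw [K [z [Z [Kk [P [HK [Hz [HZ [HKk [HP [-> [-> H]]]]]]]]]]]]].
    split; [auto|]. exists K; split; [auto|]. exists z; split; [auto|]. exists Z; split; [auto|].
    exists Kk; split; [auto|]. exists P; split; [auto|]. split; [|split; [|exact H]].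
    + pose proof (pair_ge_r 2 (pair 26 K)). pose proof (pair_ge_r 3 (pair 2 (pair 26 K))).
      exists (pair 26 K); split; [lia|]. exists (pair 2 (pair 26 K)); split; [lia|]. auto.
    + set (b3 := pair (pair 1 (pair 0 z)) K).
      pose proof (pair_ge_r 0 z). pose proof (pair_ge_r 1 (pair 0 z)).
      pose proof (pair_ge_l (pair 1 (pair 0 z)) K). pose proof (pair_ge_r 2 b3).
      pose proof (pair_ge_r 3 (pair 2 b3)).
      exists (pair 0 z); split; [lia|]. exists (pair 1 (pair 0 z)); split; [lia|].
      exists b3; split; [lia|]. exists (pair 2 b3); split; [lia|]. auto.
Qed.

Definition diag_code x K := diag_target (num_code x) K.

Lemma code_diag_guard m th :
  code (fall (fimp (feq (tvar 0) (num m)) th)) = diag_code m (code th).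
Proof. reflexivity. Qed.

Lemma diag_graph_sound w y x : d0_holds (env_wyx w y x) diag_graph ->
  y <= w /\ exists K, x = diag_source K /\ y = diag_code x K.
Proof.
  intros [Hyw [K [z [Z [Kk [P (_ & _ & _ & _ & _ & Hx & Hy & HZ & H2 & _ & H2in & HZin & Hcl)]]]]]]
    %diag_graph_spec.
  split; [auto|]. exists K. split; [auto|].
  rewrite Hy. unfold diag_code. f_equal. eapply chain_num_code; eauto.
Qed.

Lemma diag_graph_functional w y x w' y' :
  d0_holds (env_wyx w y x) diag_graph -> d0_holds (env_wyx w' y' x) diag_graph -> y = y'.
Proof.
  intros [_ [K [-> ->]]]%diag_graph_sound [_ [K' [E ->]]]%diag_graph_sound.
  unfold diag_source in E. apply pair_inj in E as [_ E].
  apply pair_inj in E as [_ E]. apply pair_inj in E as [_ ->]. reflexivity.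
Qed.

Lemma diag_graph_total K : let x := diag_source K in
  exists w, d0_holds (env_wyx w (diag_code x K) x) diag_graph.
Proof.
  intro x. set (Z := pair x (num_code x)).
  assert (HZ2 : 2 <= Z).
  { change 2 with (pair 0 (num_code 0)).
    apply pair_mono; [lia | apply num_code_mono; lia]. }
  assert (CM : forall v, v <= Z ->
    coded_in (chain_K x) (chain_P x) v <-> exists k, k <= x /\ v = pair k (num_code k))
    by apply chain_mem.
  exists (diag_code x K + num_code x + Z + chain_K x + chain_P x + K). apply diag_graph_spec.
  split; [lia|]. exists K, (num_code x), Z, (chain_K x), (chain_P x).
  do 5 (split; [lia|]). do 3 (split; [reflexivity|]).
  split; [exact HZ2|]. split; [apply chain_P_pos|].
  split; [apply CM; [lia | exists 0; split; [lia | reflexivity]]|].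
  split; [apply CM; [lia | exists x; split; auto]|].
  intros i Hi u Hu v Hv -> [k [Hk E]]%CM Hne; [|lia].
  apply pair_inj in E as [-> ->].
  assert (k <> x) by (intros ->; apply Hne; reflexivity).
  assert (Hle : pair (S k) (num_code (S k)) <= Z)
    by (apply pair_mono; [lia | apply num_code_mono; lia]).
  pose proof (pair_ge_r (S k) (num_code (S k))).
  exists (num_code (S k)). split; [lia|]. exists (pair (S k) (num_code (S k))).
  do 3 (split; [auto|]). apply CM; [lia|]. exists (S k). split; [lia | reflexivity].
Qed.

(* [sub_under2] moves the variable [x] of [diag_graph] under two extra binders. *)
Definition sub_under2 : nat -> term :=
  fun n => match n with 0 => tvar 0 | 1 => tvar 1 | _ => tvar 4 end.

(* Any other solution with witness at most [w] has the same value.  Conjoined with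
   [diag_graph], this makes the graph provably functional in R: a competing witness
   is either below the true one, hence a numeral, or above it, and then this
   clause applies to the true solution. *)
Definition diag_graph_unique : delta0 :=
  DAll (tvar 0) (DAll (tvar 1) (DImp (d0_subst sub_under2 diag_graph) (DEq (tvar 1) (tvar 3)))).

Definition diag_graph_min : delta0 := DAnd diag_graph diag_graph_unique.

(* Keeps [simpl] (inside [solve_taut]) from expanding this large formula. *)
Arguments diag_graph_min : simpl never.

Lemma diag_graph_min_holds K x : x = diag_source K ->
  exists W, d0_holds (env_wyx W (diag_code x K) x) diag_graph_min.
Proof.
  intros Hx. destruct (diag_graph_total K) as [W HB]. rewrite <- Hx in HB.
  exists W. split; [exact HB|].
  intros u _ v _ H. cbn [teval env_wyx scons]. apply d0_holds_subst in H.
  assert (H' : d0_holds (env_wyx v u x) diag_graph)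
    by (eapply d0_holds_ext; [|exact H]; intros [|[|n]]; reflexivity).
  symmetry. exact (diag_graph_functional _ _ _ _ _ HB H').
Qed.

Fixpoint tboundb (k : nat) (t : term) : bool :=
  match t with
  | tvar n => n <? k
  | tzero => true
  | tsucc u => tboundb k u
  | tplus u v | tmult u v => tboundb k u && tboundb k v
  end.

Fixpoint d0_boundb (k : nat) (a : delta0) : bool :=
  match a with
  | DEq t s | DLe t s => tboundb k t && tboundb k s
  | DNeg b => d0_boundb k b
  | DImp b c | DAnd b c => d0_boundb k b && d0_boundb k c
  | DAll t b | DEx t b => tboundb k t && d0_boundb (S k) b
  end.

Lemma tboundb_sound t k : tboundb k t = true -> tbound k t.
Proof. induction t; simpl; rewrite ?andb_true_iff; try rewrite Nat.ltb_lt; intuition. Qed.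

Lemma d0_boundb_sound a : forall k, d0_boundb k a = true -> fbound k (d0_form a).
Proof.
  induction a; intro k; simpl; rewrite ?andb_true_iff; intros;
    repeat match goal with H : _ /\ _ |- _ => destruct H end; unfold fand, fneg; simpl;
    repeat split; auto using tboundb_sound, fle_bound.
  all: try (apply fle_bound; simpl; [lia | apply tbound_shift, tboundb_sound; auto]).
  all: try lia; repeat apply tbound_shift; apply tboundb_sound; auto.
Qed.

Lemma diag_graph_min_bound : fbound 3 (d0_form diag_graph_min).
Proof. apply d0_boundb_sound. vm_compute. reflexivity. Qed.

(** * The diagonal lemma *)

Definition subst_x (x : nat) : nat -> term := scons (tvar 0) (scons (tvar 1) (fun _ => num x)).

Lemma fsubst_nums_env k j x A :
  fsubst (scons (num k) (scons (num j) (fun _ => num x))) A = fsubst (nums (env_wyx k j x)) A.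
Proof. apply fsubst_ext. intros [|[|n]]; reflexivity. Qed.

Lemma d0_all_elim T sg t a s :
  Prov T (fimp (fsubst sg (d0_form (DAll t a)))
               (fimp (fle s (tsubst sg t)) (fsubst (scons s sg) (d0_form a)))).
Proof.
  rewrite fsubst_d0_all.
  pose proof (P_inst T (fimp (fle (tvar 0) (tshift (tsubst sg t))) (fsubst (up sg) (d0_form a))) s) as H.
  change (inst s (fimp ?P ?Q)) with (fimp (inst s P) (inst s Q)) in H.
  rewrite inst_up in H. unfold inst at 1 in H. rewrite fle_subst, tsubst_scons_shift in H. exact H.
Qed.

Section DiagGraphProvable.
Variable T : theory.
Hypothesis HR : extends_R T.
Hypothesis HT : closed_theory T.
Variables x N W : nat.
Hypothesis HB : d0_holds (env_wyx W N x) diag_graph_min.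

Let graph := fsubst (subst_x x) (d0_form diag_graph).
Let value_is_N := feq (tvar 1) (num N).

Lemma R_graph_unique_at k : Prov T (fimp (feq (tvar 0) (num k)) (fimp graph value_is_N)).
Proof.
  set (sg := scons (tvar 1) (fun _ => num x)).
  assert (Hle : Prov T (fimp graph (fle (tvar 1) (tvar 0)))).
  { unfold graph, diag_graph. cbn [d0_form]. unfold fand, fneg. cbn [fsubst].
    rewrite fle_subst. simpl. apply taut_Prov. solve_taut. }
  pose proof (leib_scons0 T (tvar 0) (num k) sg (fle (tvar 1) (tvar 0))) as Hle_k.
  rewrite !fle_subst in Hle_k. simpl in Hle_k.
  assert (Hcases : Prov T (fimp (bigor_t (tvar 1) k)
                             (fimp (feq (tvar 0) (num k)) (fimp graph value_is_N)))).
  { apply bigor_elim. intros j Hj.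
    pose proof (leib_scons0 T (tvar 0) (num k) sg (d0_form diag_graph)) as L1.
    pose proof (leib_scons1 T (tvar 1) (num j) (num k) (fun _ => num x) (d0_form diag_graph)) as L2.
    rewrite fsubst_nums_env in L2.
    change (fsubst (scons (tvar 0) sg) (d0_form diag_graph)) with graph in L1.
    destruct (classic (d0_holds (env_wyx k j x) diag_graph)) as [E | E].
    - replace j with N by (apply (diag_graph_functional W N x k j); [apply HB | exact E]).
      apply taut_Prov. unfold value_is_N. solve_taut.
    - refine (taut_mp3 _ _ _ _ _ _ L1 L2 (d0_false T HR HT _ _ E)). solve_taut. }
  refine (taut_mp4 _ _ _ _ _ _ _ Hle Hle_k (R_le_num T HR (tvar 1) k) Hcases). solve_taut.
Qed.

Lemma R_graph_unique_below n : Prov T (fimp (fle (tvar 0) (num n)) (fimp graph value_is_N)).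
Proof.
  assert (H : Prov T (fimp (bigor_t (tvar 0) n) (fimp graph value_is_N)))
    by (apply bigor_elim; intros k _; apply R_graph_unique_at).
  refine (taut_mp2 _ _ _ _ _ (R_le_num T HR (tvar 0) n) H). solve_taut.
Qed.

Lemma R_graph_min_unique :
  Prov T (fimp (fsubst (subst_x x) (d0_form diag_graph_min)) value_is_N).
Proof.
  set (others := fsubst (subst_x x) (d0_form diag_graph_unique)).
  change (fsubst (subst_x x) (d0_form diag_graph_min)) with (fand graph others).
  pose proof (d0_all_elim T (subst_x x) (tvar 0)
                (DAll (tvar 1) (DImp (d0_subst sub_under2 diag_graph) (DEq (tvar 1) (tvar 3))))
                (num N)) as M1.
  change (fsubst (subst_x x) (d0_form (DAll _ _))) with others in M1. simpl tsubst in M1.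
  pose proof (d0_all_elim T (scons (num N) (subst_x x)) (tvar 1)
                (DImp (d0_subst sub_under2 diag_graph) (DEq (tvar 1) (tvar 3))) (num W)) as M2.
  simpl tsubst in M2.
  change (fsubst ?s (d0_form (DImp ?A ?B)))
    with (fimp (fsubst s (d0_form A)) (fsubst s (d0_form B))) in M2.
  change (fsubst ?s (d0_form (DEq ?a ?b))) with (feq (tsubst s a) (tsubst s b)) in M2.
  cbn [tsubst scons subst_x] in M2.
  rewrite d0_form_subst, fsubst_comp in M2.
  rewrite (fsubst_ext (d0_form diag_graph) _ (nums (env_wyx W N x))) in M2
    by (intros [|[|n]]; reflexivity).
  pose proof (d0_true T HR HT (env_wyx W N x) diag_graph (proj1 HB)) as C.
  assert (Habove : Prov T (fimp others (fimp (fle (num N) (tvar 0))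
                                           (fimp (fle (num W) (tvar 0)) value_is_N)))).
  { unfold value_is_N.
    refine (taut_mp4 _ _ _ _ _ _ _ M1 M2 C (eq_sym T (num N) (tvar 1))). solve_taut. }
  refine (taut_mp5 _ _ _ _ _ _ _ _ (R_le_total T HR (tvar 0) W) (R_le_total T HR (tvar 0) N)
            (R_graph_unique_below W) (R_graph_unique_below N) Habove).
  solve_taut.
Qed.

End DiagGraphProvable.

Lemma R_graph_min_at_most T x N W : extends_R T -> closed_theory T ->
  d0_holds (env_wyx W N x) diag_graph_min ->
  Prov T (fimp (fex (fsubst (subst_x x) (d0_form diag_graph_min))) (feq (tvar 0) (num N))).
Proof.
  intros HR HT HB. apply ex_elim; auto. unfold fshift. simpl. rewrite tsubst_num.
  apply (R_graph_min_unique T HR HT x N W HB).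
Qed.

Lemma R_graph_min_at_least T x N W : extends_R T -> closed_theory T ->
  d0_holds (env_wyx W N x) diag_graph_min ->
  Prov T (inst (num N) (fex (fsubst (subst_x x) (d0_form diag_graph_min)))).
Proof.
  intros HR HT HB. unfold inst.
  change (fsubst ?s (fex ?P)) with (fex (fsubst (up s) P)).
  eapply P_mp; [apply (fex_intro T _ (num W))|].
  rewrite inst_up, fsubst_comp, (fsubst_ext (d0_form diag_graph_min) _ (nums (env_wyx W N x))).
  - apply d0_true; auto.
  - intros [|[|n]]; simpl; auto. apply tsubst_num.
Qed.

(* The guarded form is used for the fixed point because its code, unlike that of
   [inst (num m) th], is computed from the codes of [m] and [th] by pairing alone. *)
Lemma guard_iff_inst T th m : closed_theory T -> fbound 1 th ->
  Prov T (fimp (fall (fimp (feq (tvar 0) (num m)) th)) (inst (num m) th)) /\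
  Prov T (fimp (inst (num m) th) (fall (fimp (feq (tvar 0) (num m)) th))).
Proof.
  intros HT Hth. assert (Sm : sentence (inst (num m) th)) by (apply inst_sentence; auto). split.
  - pose proof (P_inst T (fimp (feq (tvar 0) (num m)) th) (num m)) as I.
    change (inst (num m) (fimp ?P ?Q)) with (fimp (inst (num m) P) (inst (num m) Q)) in I.
    unfold inst at 1 in I. cbn [fsubst tsubst scons] in I. rewrite tsubst_num in I.
    refine (taut_mp2 _ _ _ _ _ I (P_refl T (num m))). solve_taut.
  - eapply P_mp; [apply P_allimp|]. apply gen; auto. rewrite sentence_shift; auto.
    pose proof (leib_scons0 T (num m) (tvar 0) tvar th) as L.
    rewrite fbound1_inst_var0 in L by auto. fold (inst (num m) th) in L.
    refine (taut_mp2 _ _ _ _ _ L (eq_sym T (tvar 0) (num m))). solve_taut.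
Qed.

Section Diagonal.
Variable T : theory.
Hypothesis HR : extends_R T.
Hypothesis HT : closed_theory T.
Variable psi : form.
Hypothesis Hpsi : fbound 1 psi.

(* [diag_theta] says: the diagonal function maps x0 to some y with psi(y). *)
Let diag_theta := fex (fand (fex (d0_form diag_graph_min)) psi).

Lemma diag_theta_bound : fbound 1 diag_theta.
Proof.
  assert (H : forall A, fbound 3 A -> fbound 1 (fex (fand (fex A) psi))).
  { intros A HA. simpl. repeat split; auto. eapply fbound_mono; eauto. }
  apply H, diag_graph_min_bound.
Qed.

Lemma inst_diag_theta m : inst (num m) diag_theta =
  fex (fand (fex (fsubst (subst_x m) (d0_form diag_graph_min))) psi).
Proof.
  unfold diag_theta, inst.
  change (fsubst ?s (fex ?P)) with (fex (fsubst (up s) P)).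
  change (fsubst ?s (fand ?P ?Q)) with (fand (fsubst s P) (fsubst s Q)).
  change (fsubst ?s (fex ?P)) with (fex (fsubst (up s) P)).
  rewrite (fbound1_subst_up psi) by auto. do 3 f_equal.
  apply (fsubst_bound _ 3 diag_graph_min_bound). intros [|[|[|n]]] Hn; try reflexivity.
  - cbn [up scons subst_x]. rewrite !tshift_num. reflexivity.
  - lia.
Qed.

Lemma R_diag_theta_iff m N W : d0_holds (env_wyx W N m) diag_graph_min ->
  Prov T (fimp (inst (num m) diag_theta) (inst (num N) psi)) /\
  Prov T (fimp (inst (num N) psi) (inst (num m) diag_theta)).
Proof.
  intros HB. rewrite inst_diag_theta.
  set (G := fex (fsubst (subst_x m) (d0_form diag_graph_min))). split.
  - apply ex_elim; auto. rewrite sentence_shift by (apply inst_sentence; auto).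
    pose proof (leib_scons0 T (tvar 0) (num N) tvar psi) as L.
    rewrite fbound1_inst_var0 in L by auto. fold (inst (num N) psi) in L.
    refine (taut_mp2 _ _ _ _ _ (R_graph_min_at_most T m N W HR HT HB) L). solve_taut.
  - pose proof (fex_intro T (fand G psi) (num N)) as F.
    change (inst (num N) (fand ?P ?Q)) with (fand (inst (num N) P) (inst (num N) Q)) in F.
    refine (taut_mp2 _ _ _ _ _ F (R_graph_min_at_least T m N W HR HT HB)). solve_taut.
Qed.

Lemma diag_fixed_point m W :
  d0_holds (env_wyx W (diag_code m (code diag_theta)) m) diag_graph_min ->
  let d := fall (fimp (feq (tvar 0) (num m)) diag_theta) in
  sentence d /\ Prov T (fimp d (apply_gn psi d)) /\ Prov T (fimp (apply_gn psi d) d).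
Proof.
  intros HB d.
  destruct (guard_iff_inst T diag_theta m HT diag_theta_bound) as [A1 A2].
  destruct (R_diag_theta_iff m _ W HB) as [B1 B2].
  unfold apply_gn, d. rewrite code_diag_guard. split; [|split].
  - split; [split; [simpl; lia | apply num_bound] | apply diag_theta_bound].
  (* Not [solve_taut]: its [simpl] would compute the code of [d]. *)
  - exact (imp_trans _ _ _ _ A1 B1).
  - exact (imp_trans _ _ _ _ B2 A2).
Qed.

Lemma diagonal_lemma : exists d, sentence d /\
  Prov T (fimp d (apply_gn psi d)) /\ Prov T (fimp (apply_gn psi d) d).
Proof.
  destruct (diag_graph_min_holds _ _ (code_diag_source diag_theta)) as [W HB].
  eexists. exact (diag_fixed_point _ _ HB).
Qed.

End Diagonal.

Lemma refute_of_independent U d a : closed_theory U -> sentence d ->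
  (Consistent (extend U d) -> Consistent (extend (extend U d) a)) ->
  Prov U (fimp d (fneg a)) -> Prov U (fneg d).
Proof.
  intros HU Hd Hind H. apply refute_of_inconsistent; auto. intros C. apply (Hind C).
  refine (taut_mp3 _ _ _ _ _ _ (extend_lift _ a _ (extend_lift _ d _ H))
            (extend_lift _ a _ (extend_hyp U d)) (extend_hyp _ a)).
  solve_taut.
Qed.

Lemma iff_bot_of_refuted U d : Prov U (fneg d) -> Prov U (fiff d fbot).
Proof. apply taut_mp1. solve_taut. Qed.

Theorem mainTheorem3 :
  forall U : theory,
    (forall p, U p -> sentence p) ->
    (forall p, R_axiom p -> Prov U p) ->
    Consistent U ->
    ~ (exists rho : form,
          fbound 1 rho /\
          (forall phi, sentence phi ->
             Consistent (extend U phi) ->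
             Consistent (extend (extend U phi) (apply_gn rho phi)) /\
             Consistent (extend (extend U phi) (fneg (apply_gn rho phi)))) /\
          (forall phi psi, sentence phi -> sentence psi ->
             Prov U (fiff phi psi) ->
             Prov U (fiff (apply_gn rho phi) (apply_gn rho psi)))).
Proof.
  intros U HU HR HC [rho [Hb [Hind Hext]]].
  destruct (diagonal_lemma U HR HU (fneg rho) (conj Hb I)) as [d0 [S0 [F0 G0]]].
  destruct (diagonal_lemma U HR HU rho Hb) as [d1 [S1 [F1 G1]]].
  change (apply_gn (fneg rho) d0) with (fneg (apply_gn rho d0)) in F0, G0.
  assert (N0 : Prov U (fneg d0))
    by (apply (refute_of_independent U d0 (apply_gn rho d0)); auto; apply Hind; auto).
  assert (N1 : Prov U (fneg d1)).
  { apply (refute_of_independent U d1 (fneg (apply_gn rho d1))); auto; [apply Hind; auto|].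
    refine (taut_mp1 _ _ _ _ F1). solve_taut. }
  pose proof (Hext d0 fbot S0 I (iff_bot_of_refuted U d0 N0)) as E0.
  pose proof (Hext d1 fbot S1 I (iff_bot_of_refuted U d1 N1)) as E1.
  assert (R0 : Prov U (apply_gn rho d0)) by (refine (taut_mp2 _ _ _ _ _ G0 N0); solve_taut).
  assert (R1 : Prov U (fneg (apply_gn rho d1))) by (refine (taut_mp2 _ _ _ _ _ G1 N1); solve_taut).
  apply HC. refine (taut_mp4 _ _ _ _ _ _ _ E0 E1 R0 R1). solve_taut.
Qed.
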